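(* Let $n\ge 2$, let $\sigma,\tau$ be positive integers with $|\sigma-\tau|\le1$ and $d=\sigma+\tau$, and let $\mathcal{S}$ be the set of all $\mathbf{T}=(T_{p-q})_{p,q=0}^{n-1}\in\mathcal{T}_{n,d}(\mathcal{O}_{\sigma,\tau})$ such that $T_j$ is noninvertible for every $j\neq0$. Then there are no $A,B\in\mathcal{O}_{\sigma,\tau}$ with $\operatorname{Ker}A\cap\operatorname{Ker}B=\{0\}$ such that $\mathcal{S}=\mathcal{F}_{A,B}^{\mathcal{O}_{\sigma,\tau}}$.
   Context: For $\sigma,\tau$ positive integers with $\sigma+\tau=d$, the Schur algebra is $$\mathcal{O}_{\sigma,\tau}=\left\{\begin{pmatrix}\lambda I_\sigma & X\\ 0 & \lambda I_\tau\end{pmatrix} : \lambda\in\mathbb{C},\ X\in\mathcal{M}_{\sigma\times\tau}(\mathbb{C})\right\}\subseteq\mathcal{M}_{d\times d}(\mathbb{C}),$$ written with respect to $\mathbb{C}^d=\mathbb{C}^\sigma\oplus\mathbb{C}^\tau$. For positive integers $n,d$, $\mathcal{T}_{n,d}$ denotes the set of block Toeplitz matrices $\mathbf{T}=(T_{p-q})_{p,q=0}^{n-1}$: $nd\times nd$ complex matrices partitioned into $n\times n$ blocks of size $d\times d$, whose $(p,q)$ block is $T_{p-q}$ for some $T_{-(n-1)},\dots,T_{n-1}\in\mathcal{M}_{d\times d}(\mathbb{C})$. For a subalgebra $\mathcal{B}\subseteq\mathcal{M}_{d\times d}(\mathbb{C})$, $\mathcal{T}_{n,d}(\mathcal{B})$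 is the set of $\mathbf{T}\in\mathcal{T}_{n,d}$ with all $T_j\in\mathcal{B}$. For $A,B\in\mathcal{M}_{d\times d}(\mathbb{C})$, $$\mathcal{F}_{A,B}^{\mathcal{B}}=\{(T_{p-q})_{p,q=0}^{n-1}\in\mathcal{T}_{n,d}(\mathcal{B}) : AT_j=BT_{j-n}\text{ for } j=1,2,\dots,n-1\}.$$ *)

From HB Require Import structures.
From mathcomp Require Import all_boot all_order all_algebra.
Set Implicit Arguments. Unset Strict Implicit. Unset Printing Implicit Defensive.
Import Order.TTheory GRing.Theory Num.Theory.
Local Open Scope ring_scope.

(* Block index: the entry (i,j) of block (p,q) of an (n*d)x(n*d) matrix sits
   at row p*d+i, column q*d+j. *)
Lemma blk_index_proof (n d : nat) (p : 'I_n) (i : 'I_d) : (p * d + i < n * d)%N.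
Proof.
have Hp : (p.+1 <= n)%N := ltn_ord p.
apply: (@leq_trans (p * d + d)%N); first by rewrite ltn_add2l ltn_ord.
by rewrite addnC -mulSn leq_mul2r Hp orbT.
Qed.

Definition blk_index (n d : nat) (p : 'I_n) (i : 'I_d) : 'I_(n * d) :=
  Ordinal (blk_index_proof p i).

Definition schur_alg (C : fieldType) (s t : nat) (M : 'M[C]_(s + t)) : Prop :=
  exists (lam : C) (X : 'M[C]_(s, t)),
    M = block_mx (lam%:M) X 0 (lam%:M).

Definition is_block_toeplitz (C : fieldType) (n d : nat)
    (M : 'M[C]_(n * d)) (T : int -> 'M[C]_d) : Prop :=
  forall (p q : 'I_n) (i j : 'I_d),
    M (blk_index p i) (blk_index q j) = T (p%:Z - q%:Z) i j.

Definition toeplitz_in (C : fieldType) (n d : nat) (B : 'M[C]_d -> Prop)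
    (M : 'M[C]_(n * d)) (T : int -> 'M[C]_d) : Prop :=
  is_block_toeplitz M T /\
  forall j : int, - (n.-1)%:Z <= j <= (n.-1)%:Z -> B (T j).

Definition F_AB (C : fieldType) (n d : nat) (B : 'M[C]_d -> Prop)
    (A Bm : 'M[C]_d) (M : 'M[C]_(n * d)) : Prop :=
  exists T : int -> 'M[C]_d,
    toeplitz_in B M T /\
    forall j : nat, (1 <= j <= n.-1)%N ->
      A *m T j%:Z = Bm *m T (j%:Z - n%:Z).

Definition S_set (C : fieldType) (n d : nat) (B : 'M[C]_d -> Prop)
    (M : 'M[C]_(n * d)) : Prop :=
  exists T : int -> 'M[C]_d,
    toeplitz_in B M T /\
    forall j : int, - (n.-1)%:Z <= j <= (n.-1)%:Z -> j != 0 ->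
      T j \notin unitmx.

From HB Require Import structures.
From mathcomp Require Import all_boot all_order all_algebra.
From mathcomp Require Import zify.
Set Implicit Arguments. Unset Strict Implicit. Unset Printing Implicit Defensive.
Import Order.TTheory GRing.Theory Num.Theory.
Local Open Scope ring_scope.

(* Let N be the element of O_{s,t} with scalar part 0 and all-ones
   corner block, and e the vector (1,...,1;0,...,0), so that N e = 0.  Every
   element of O_{s,t} with zero scalar part kills e, hence is noninvertible.
   Therefore any block sequence whose blocks are all 0 or N defines a matrix
   of S.  If S = F_{A,B}, such a matrix is in F_{A,B}, and since a block
   Toeplitz matrix determines its blocks, the sequence itself satisfies
   A T_j = B T_{j-n} for 1 <= j <= n-1.
   - The sequence with T_1 = N (other blocks 0), at j = 1, gives A N = 0.
   - The sequence with T_{-1} = N, at j = n-1, gives B N = 0.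
   For a Schur element A, A N = 0 forces its scalar part to vanish, so A e = 0;
   likewise B e = 0, contradicting Ker A /\ Ker B = {0}. *)

Lemma nonunit_of_kernel_vec (R : comUnitRingType) (m : nat)
    (M : 'M[R]_m) (v : 'cV[R]_m) :
  v != 0 -> M *m v = 0 -> M \notin unitmx.
Proof.
move=> v_neq0 Mv0; apply/negP => Munit.
by move: v_neq0; rewrite -(mulKmx Munit v) Mv0 mulmx0 eqxx.
Qed.

Section BlockToeplitz.
Variables (C : fieldType) (n d : nat).
Hypothesis d_gt0 : (0 < d)%N.

Definition toeplitz_mx (T : int -> 'M[C]_d) : 'M[C]_(n * d) :=
  \matrix_(r, c) T ((r %/ d)%N%:Z - (c %/ d)%N%:Z)
     (Ordinal (ltn_pmod r d_gt0)) (Ordinal (ltn_pmod c d_gt0)).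

Lemma blk_index_div (p : 'I_n) (i : 'I_d) : ((p * d + i) %/ d)%N = p.
Proof. by rewrite divnMDl // divn_small // addn0. Qed.

Lemma blk_index_mod (p : 'I_n) (i : 'I_d) : ((p * d + i) %% d)%N = i.
Proof. by rewrite modnMDl modn_small. Qed.

Lemma toeplitz_mxP (T : int -> 'M[C]_d) : is_block_toeplitz (toeplitz_mx T) T.
Proof.
move=> p q i j; rewrite mxE /= !blk_index_div.
by congr (T _ _ _); apply: val_inj; rewrite /= blk_index_mod.
Qed.

Lemma block_index_diff (n_gt0 : (0 < n)%N) (j : int) :
  - (n.-1)%:Z <= j <= (n.-1)%:Z -> exists p q : 'I_n, p%:Z - q%:Z = j.
Proof.
case: j => k hk.
  have k_lt_n : (k < n)%N by lia.
  by exists (Ordinal k_lt_n), (Ordinal n_gt0) => /=; lia.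
have k_lt_n : (k.+1 < n)%N by lia.
by exists (Ordinal n_gt0), (Ordinal k_lt_n) => /=; lia.
Qed.

Lemma toeplitz_blocks_unique (n_gt0 : (0 < n)%N) (M : 'M[C]_(n * d))
    (T T' : int -> 'M[C]_d) (j : int) :
  is_block_toeplitz M T -> is_block_toeplitz M T' ->
  - (n.-1)%:Z <= j <= (n.-1)%:Z -> T j = T' j.
Proof.
move=> MT MT' /(block_index_diff n_gt0) [p [q <-]].
by apply/matrixP => i k; rewrite -MT -MT'.
Qed.

Lemma S_in_F_relation (n_ge2 : (2 <= n)%N) (P : 'M[C]_d -> Prop)
    (A B : 'M[C]_d) (T : int -> 'M[C]_d) :
  (forall M : 'M[C]_(n * d), S_set P M -> F_AB P A B M) ->
  (forall j, P (T j)) -> (forall j, j != 0 -> T j \notin unitmx) ->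
  forall j : nat, (1 <= j <= n.-1)%N -> A *m T j%:Z = B *m T (j%:Z - n%:Z).
Proof.
move=> SF PT nonunitT j hj.
have n_gt0 : (0 < n)%N by lia.
have [T' [[MT' _] relT']] : @F_AB C n d P A B (toeplitz_mx T).
  apply: SF; exists T; split=> [|k _ /nonunitT //].
  by split=> [|k _]; [exact: toeplitz_mxP | exact: PT].
have blocksT : forall k : int, - (n.-1)%:Z <= k <= (n.-1)%:Z -> T k = T' k.
  by move=> k; exact: toeplitz_blocks_unique n_gt0 _ _ _ _ (toeplitz_mxP T) MT'.
by rewrite !blocksT ?relT' //; lia.
Qed.

End BlockToeplitz.

Section SchurNilpotent.
Variables (C : fieldType) (s t : nat).
Hypotheses (s_gt0 : (0 < s)%N) (t_gt0 : (0 < t)%N).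

Definition schur_nil : 'M[C]_(s + t) :=
  block_mx 0 (const_mx 1 : 'M[C]_(s, t)) 0 0.

Definition top_vec : 'cV[C]_(s + t) := col_mx (const_mx 1 : 'M[C]_(s, 1)) 0.

Lemma top_vec_neq0 : top_vec != 0.
Proof.
apply/eqP => /matrixP /(_ (lshift t (Ordinal s_gt0)) ord0).
by rewrite col_mxEu !mxE => /eqP; rewrite oner_eq0.
Qed.

Lemma schur_nil_top_vec : schur_nil *m top_vec = 0.
Proof. by rewrite mul_block_col !mul0mx !mulmx0 !addr0 col_mx0. Qed.

Lemma schur_alg_nil : schur_alg schur_nil.
Proof. by exists 0, (const_mx 1); rewrite /schur_nil !raddf0. Qed.

Lemma schur_alg0 : schur_alg (0 : 'M[C]_(s + t)).
Proof. by exists 0, 0; rewrite !raddf0 block_mx0. Qed.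

(* A Schur element annihilating N has zero scalar part, so it kills e. *)
Lemma schur_ann_nil_top_vec (A : 'M[C]_(s + t)) :
  schur_alg A -> A *m schur_nil = 0 -> A *m top_vec = 0.
Proof.
move=> [a [Y ->]]; rewrite mulmx_block -block_mx0 => /eq_block_mx [_ corner _ _].
have a0 : a = 0.
  move: corner; rewrite mulmx0 addr0 mul_scalar_mx.
  by move=> /matrixP /(_ (Ordinal s_gt0) (Ordinal t_gt0)); rewrite !mxE mulr1.
by rewrite a0 mul_block_col raddf0 !mul0mx !mulmx0 !addr0 col_mx0.
Qed.

Definition single_nil (k : int) : int -> 'M[C]_(s + t) :=
  fun j => if j == k then schur_nil else 0.

Lemma single_nil_schur (k j : int) : schur_alg (single_nil k j).
Proof. by rewrite /single_nil; case: ifP => _; [exact: schur_alg_nil | exact: schur_alg0]. Qed.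

Lemma single_nil_nonunit (k j : int) : single_nil k j \notin unitmx.
Proof.
apply: (nonunit_of_kernel_vec top_vec_neq0); rewrite /single_nil.
by case: ifP => _; [exact: schur_nil_top_vec | rewrite mul0mx].
Qed.

End SchurNilpotent.

Theorem mainTheorem11 (C : numClosedFieldType) (n s t : nat)
  (hn : (2 <= n)%N) (hs : (0 < s)%N) (ht : (0 < t)%N)
  (hst : (s <= t.+1)%N && (t <= s.+1)%N) :
  ~ exists A B : 'M[C]_(s + t),
      [/\ schur_alg A, schur_alg B,
          (forall v : 'cV[C]_(s + t), A *m v = 0 -> B *m v = 0 -> v = 0)
        & forall M : 'M[C]_(n * (s + t)),
            S_set (@schur_alg C s t) M <-> F_AB (@schur_alg C s t) A B M].
Proof.
move=> [A [B [schurA schurB ker_trivial SF]]].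
have d_gt0 : (0 < s + t)%N by lia.
have relation k := S_in_F_relation d_gt0 hn (fun M => (SF M).1)
  (@single_nil_schur C s t k) (fun j _ => @single_nil_nonunit C s t hs k j).
have AN : A *m schur_nil C s t = 0.
  have := relation 1 1%N; rewrite /single_nil eqxx.
  have -> : (1%N%:Z - n%:Z == 1) = false by apply/eqP; lia.
  by rewrite mulmx0; apply; lia.
have BN : B *m schur_nil C s t = 0.
  have := relation (-1) n.-1; rewrite /single_nil.
  have -> : ((n.-1)%:Z == -1) = false by apply/eqP; lia.
  have -> : ((n.-1)%:Z - n%:Z == -1) = true by apply/eqP; lia.
  by rewrite mulmx0 => rel; rewrite -rel //; lia.
have := ker_trivial _ (schur_ann_nil_top_vec hs ht schurA AN)
                      (schur_ann_nil_top_vec hs ht schurB BN).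
by apply/eqP; exact: top_vec_neq0.
Qed.
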